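(* Let $n\ge 2$. The maps $\sigma_1,\dots,\sigma_{n-1}$ on the set $\widetilde{\mathcal T}_n=\mathcal T_n\times\mathbb Z/n\mathbb Z$ of augmented rooted labeled trees defined in the context define an action of the braid group $B_n$ on $\widetilde{\mathcal T}_n$: they are bijections satisfying $\sigma_i\sigma_j=\sigma_j\sigma_i$ for $|i-j|\ge2$ and $\sigma_i\sigma_{i+1}\sigma_i=\sigma_{i+1}\sigma_i\sigma_{i+1}$ for $1\le i\le n-2$.
   Context: $\mathcal T_n$ is the set of rooted trees with vertices labeled $1,\dots,n$; $v_i$ is the vertex labeled $i$. Maps $\sigma_i$ on $\mathcal T_n$: if $v_{i+1}$ is the root of $T$, $\sigma_iT$ is $T$ with labels $i,i+1$ interchanged. Otherwise form $T_+$ by adding a vertex $v_0$ as parent of the root, write $a\to b$ for ''$a$ is the parent of $b$'', and: (0) if neither of $v_i,v_{i+1}$ is the parent of the other and they have different parents, interchange labels $i,i+1$; (1) if $v_k\to v_i\to v_{i+1}$, make $v_k\to v_{i+1}\to v_i$, other relations unchanged; (2) if $v_k\to v_{i+1}\to v_i$, make $v_i,v_{i+1}$ both children of $v_k$ and interchange their sets of other children, other relations unchanged; (3) if $v_i,v_{i+1}$ share parent $v_k$, interchange their sets of children and then make $v_{i+1}$ a child of $v_i$; then delete $v_0$. Reduced weight in $T$ with root $v_r$: $\overline w(v_r)=1$; if $v_i$ is a child of the root, $\overline w(v_i)$ is the number of vertices in the subtree rooted at $v_i$ (including $v_i$); otherwise $\overline w(v_i)=0$. For $(T,\varepsilon)\in\widetilde{\mathcal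 T}_n$ with root $v_r$: $\sigma_i(T,\varepsilon)=(\sigma_iT,\varepsilon)$ if $i\ne r-1$, and $\sigma_{r-1}(T,\varepsilon)=(\sigma_{r-1}T,\varepsilon+\overline w(v_{r-1}))$ with $\overline w$ computed in $T$. *)

From mathcomp Require Import all_boot all_order all_algebra.
Set Implicit Arguments. Unset Strict Implicit. Unset Printing Implicit Defensive.
Import GRing.Theory.

(* Vertex v_(j+1) (label j+1, 1 <= j+1 <= n) is represented by the ordinal j : 'I_n.
   A rooted tree is represented by its parent function p : 'I_n -> option 'I_n,
   where p v = None means v is the root (equivalently, in T_+, v is a child of v_0). *)
Definition ptree n := {ffun 'I_n -> option 'I_n}.

Definition pstep n (p : ptree n) (o : option 'I_n) : option 'I_n :=
  if o is Some w then p w else None.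

Definition is_tree n (p : ptree n) : bool :=
  (#|[set v | p v == None]| == 1) &&
  [forall v, iter n (pstep p) (Some v) == None].

Definition desc n (p : ptree n) (v u : 'I_n) : bool :=
  [exists k : 'I_n.+1, iter k (pstep p) (Some u) == Some v].

Definition wbar n (p : ptree n) (v : 'I_n) : nat :=
  if p v == None then 1
  else if p v is Some r then (if p r == None then #|[set u | desc p v u]| else 0)
  else 0.

Definition swapv n (a b v : 'I_n) : 'I_n :=
  if v == a then b else if v == b then a else v.

Definition relabel n (a b : 'I_n) (p : ptree n) : ptree n :=
  [ffun v => omap (swapv a b) (p (swapv a b v))].

(* sigma on trees, with a = v_i and b = v_(i+1) *)
Definition sigmaT n (a b : 'I_n) (p : ptree n) : ptree n :=
  if p b == None then relabel a b p
  else if p b == Some a then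
    [ffun v => if v == b then p a else if v == a then Some b else p v]
  else if p a == Some b then
    [ffun v => if v == a then p b else if v == b then p b
               else omap (swapv a b) (p v)]
  else if p a == p b then
    [ffun v => if v == b then Some a else if v == a then p a
               else omap (swapv a b) (p v)]
  else relabel a b p.

Definition aug n := (ptree n * 'Z_n)%type.

Definition is_aug n (x : aug n) : bool := is_tree x.1.

Definition sigmaA n (a b : 'I_n) (x : aug n) : aug n :=
  (sigmaT a b x.1,
   if x.1 b == None then (x.2 + (wbar x.1 a)%:R)%R else x.2).

Definition sigma n (i : nat) (x : aug n) : aug n :=
  match @insub _ (fun k => k < n) 'I_n i.-1, @insub _ (fun k => k < n) 'I_n i with
  | Some a, Some b => sigmaA a b x
  | _, _ => x
  end.

From mathcomp Require Import all_boot all_order all_algebra ring zify.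
Set Implicit Arguments. Unset Strict Implicit. Unset Printing Implicit Defensive.
Import GRing.Theory.

(* The new parent of a vertex [v] under [sigmaT a b] depends only on the old
   parents of [a], [b] and [v]; away from [a] and [b] it is the old parent renamed
   by a permutation fixing every other vertex. A case analysis along the definition
   shows that the result is again a tree and expresses the new subtree sizes of [a]
   and [b] through the old ones, so the weight increment is local as well. These
   local rules commute with injective relabellings of the vertices, hence the braid
   relation, for the trees and for the weights, and the injectivity of [sigmaA] only
   involve the parents of at most four vertices: they are checked once and for all
   on pictures with at most eight vertices, by computation. Far commutation holds
   because the two rules move disjoint vertices and their renamings commute, and an
   injective self-map of the finite set of augmented trees is a bijection. *)

(** * Rooted forests as parent maps *)

Definition acyclic n (p : ptree n) := forall v, fconnect (pstep p) (Some v) None.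

Section Forest.
Variables (n : nat) (p : ptree n).
Implicit Types (u v w x y : 'I_n).

Local Notation anc := (fconnect (pstep p)).

Lemma iter_pstep_None k : iter k (pstep p) None = None.
Proof. by elim: k => //= k ->. Qed.

Lemma fconnect_pstep_None (o : option 'I_n) : anc None o = (o == None).
Proof.
apply/idP/eqP => [|->]; last exact: connect0.
by move/iter_findex <-; rewrite iter_pstep_None.
Qed.

Lemma order_pstep_le (o : option 'I_n) : order (pstep p) o <= n.+1.
Proof.
have := max_card (mem (orbit (pstep p) o)).
by rewrite card_option card_ord (card_uniqP (orbit_uniq _ _)) size_orbit.
Qed.

Lemma descE x u : desc p x u = anc (Some u) (Some x).
Proof.
apply/existsP/idP => [[k /eqP <-]|]; first exact: fconnect_iter.
move=> hc; have lt_k := leq_trans (findex_max hc) (order_pstep_le (Some u)).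
by exists (Ordinal lt_k); rewrite /= iter_findex.
Qed.

Lemma desc_rec x u : desc p x u = (u == x) || oapp (desc p x) false (p u).
Proof.
rewrite !descE fconnect_eqVf /=; congr (_ || _).
by case: (p u) => [w|] /=; rewrite ?descE ?fconnect_pstep_None.
Qed.

Lemma is_treeP :
  is_tree p <-> (exists r, forall v, (p v == None) = (v == r)) /\ acyclic p.
Proof.
split => [/andP [/cards1P [r /setP hr] /forallP hit]|[[r hr] hacyc]].
  split; first by exists r => v; have := hr v; rewrite !inE.
  by move=> v; rewrite -(eqP (hit v)) fconnect_iter.
apply/andP; split; first by apply/cards1P; exists r; apply/setP => v; rewrite !inE hr.
apply/forallP => v; have hc := hacyc v.
have le_k : findex (pstep p) (Some v) None <= n.
  by rewrite -ltnS (leq_trans (findex_max hc) (order_pstep_le _)).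
by rewrite -[X in iter X _ _](subnK le_k) iterD iter_findex // iter_pstep_None.
Qed.

Lemma fconnect_parent (q : ptree n) v w (o : option 'I_n) :
  q v = Some w -> fconnect (pstep q) (Some w) o -> fconnect (pstep q) (Some v) o.
Proof. by move=> h; apply: connect_trans; rewrite -h; apply: fconnect1. Qed.

Hypothesis hacyc : acyclic p.

Lemma acyclic_ind (P : 'I_n -> Prop) :
  (forall v, (forall u, anc (p v) (Some u) -> P u) -> P v) -> forall v, P v.
Proof.
move=> hP.
suff key k v : iter k (pstep p) (Some v) = None -> forall u, anc (Some v) (Some u) -> P u.
  by move=> v; apply: (key _ v (iter_findex (hacyc v))); apply: connect0.
elim: k v => [//|k IH] v; rewrite iterSr /= => hk.
have IHv u : anc (p v) (Some u) -> P u.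
  by case E: (p v) => [w|]; [rewrite E in hk; exact: (IH w hk u) | rewrite fconnect_pstep_None].
by move=> u; rewrite fconnect_eqVf => /orP [/eqP [<-]|]; [apply: hP|apply: IHv].
Qed.

Lemma desc_refl x : desc p x x.
Proof. by rewrite desc_rec eqxx. Qed.

Lemma desc_trans x y z : desc p x y -> desc p y z -> desc p x z.
Proof. by rewrite !descE => h1 h2; apply: connect_trans h2 h1. Qed.

Lemma desc_parent x y : p x = Some y -> desc p y x.
Proof. by move=> h; rewrite desc_rec h /= desc_refl orbT. Qed.

Lemma no_cycle x : ~ anc (p x) (Some x).
Proof.
move/iter_findex; set k := findex _ _ _; rewrite -[p x]/(pstep p (Some x)) -iterSr => hk.
have iter_cycle m : iter (m * k.+1) (pstep p) (Some x) = Some x.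
  by elim: m => // m IH; rewrite mulSn iterD IH.
have := iter_cycle (findex (pstep p) (Some x) None).
have le_K := leq_pmulr (findex (pstep p) (Some x) None) (ltn0Sn k).
by rewrite -(subnK le_K) iterD iter_findex // iter_pstep_None.
Qed.

Lemma desc_antisym x y : desc p x y -> desc p y x -> x = y.
Proof.
rewrite !descE => hxy; rewrite fconnect_eqVf => /orP [/eqP [] //|hyx].
by case: (no_cycle (connect_trans hyx hxy)).
Qed.

Lemma parent_neq x : p x != Some x.
Proof. by apply/eqP => h; apply: (@no_cycle x); rewrite h connect0. Qed.

Lemma parent_not_desc x y : p x = Some y -> desc p x y = false.
Proof.
move=> h; apply/negbTE/negP => hd.
by move: (parent_neq x); rewrite h (desc_antisym hd (desc_parent h)) eqxx.
Qed.

Lemma desc_total x y u : desc p x u -> desc p y u -> desc p x y || desc p y x.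
Proof.
rewrite !descE => /iter_findex hx /iter_findex hy.
set k := findex _ _ (Some x) in hx; set m := findex _ _ (Some y) in hy.
case: (leqP k m) => [le_km|/ltnW le_mk].
  by rewrite -(subnK le_km) iterD hx in hy; rewrite -hy fconnect_iter orbT.
by rewrite -(subnK le_mk) iterD hy in hx; rewrite -hx fconnect_iter.
Qed.

Lemma desc_char x (Phi : pred 'I_n) :
  (forall u, Phi u = (u == x) || oapp Phi false (p u)) -> desc p x =1 Phi.
Proof.
move=> hPhi; apply: acyclic_ind => u IH.
rewrite desc_rec hPhi; congr (_ || _).
by case E: (p u) => [w|] //=; apply: IH; rewrite E connect0.
Qed.

(* Induction along [p]: the [q]-path from [v] rejoins the strict [p]-ancestors of [v]. *)
Lemma acyclic_descent (q : ptree n) :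
  (forall v, exists2 o, fconnect (pstep q) (Some v) o & anc (p v) o) -> acyclic q.
Proof.
move=> hq; apply: acyclic_ind => v IH; have [[u|] hvo hpo] := hq v => //.
exact: connect_trans hvo (IH u hpo).
Qed.

End Forest.

Arguments desc_rec {n} p x u.

(** * The local rule *)

Section Swap.
Variables (n : nat) (a b : 'I_n).

Lemma swapv_l : swapv a b a = b.
Proof. by rewrite /swapv eqxx. Qed.

Lemma swapv_r : swapv a b b = a.
Proof. by rewrite /swapv eqxx; case: eqP. Qed.

Lemma swapv_id v : v != a -> v != b -> swapv a b v = v.
Proof. by rewrite /swapv => /negbTE -> /negbTE ->. Qed.

Lemma swapvK : involutive (swapv a b).
Proof.
move=> v; have [->|va] := eqVneq v a; first by rewrite swapv_l swapv_r.
have [->|vb] := eqVneq v b; first by rewrite swapv_r swapv_l.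
by rewrite !swapv_id.
Qed.

Lemma swapv_inj : injective (swapv a b).
Proof. exact: inv_inj swapvK. Qed.

End Swap.

(* [sigma_par a b (p a) (p b) v (p v)] is the parent of [v] in [sigmaT a b p]; away
   from [a] and [b] the old parent is merely renamed by [sigma_ren a b (p b)]. *)
Definition sigma_ren n (a b : 'I_n) (xb : option 'I_n) : 'I_n -> 'I_n :=
  if xb == Some a then id else swapv a b.

Definition sigma_par n (a b : 'I_n) (xa xb : option 'I_n) (v : 'I_n) (xv : option 'I_n) :=
  let relab := if v == a then omap (swapv a b) xb else if v == b then omap (swapv a b) xa
                else omap (swapv a b) xv in
  if xb == None then relab
  else if xb == Some a then (if v == b then xa else if v == a then Some b else xv)
  else if xa == Some b then (if v == a then xb else if v == b then xb else omap (swapv a b) xv)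
  else if xa == xb then (if v == b then Some a else if v == a then xa else omap (swapv a b) xv)
  else relab.

Definition size_par {R : zmodType} n (a b : 'I_n) (xa xb : option 'I_n) (sa sb : R)
    (x : 'I_n) (sx : R) : R :=
  if x == a then
    (if xb == None then sb else if xb == Some a then sa - sb
     else if xa == Some b then sb - sa else if xa == xb then sa + sb else sb)%R
  else if x == b then sa else sx.

Section LocalRule.
Variables (n : nat) (a b : 'I_n).
Implicit Types (p : ptree n) (v : 'I_n) (xa xb xv : option 'I_n).

Lemma relabelE p v : relabel a b p v = omap (swapv a b) (p (swapv a b v)).
Proof. by rewrite ffunE. Qed.

Lemma sigmaT_par p v : sigmaT a b p v = sigma_par a b (p a) (p b) v (p v).
Proof.
have relE : relabel a b p v =
    if v == a then omap (swapv a b) (p b) else if v == b then omap (swapv a b) (p a)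
    else omap (swapv a b) (p v).
  rewrite relabelE; have [->|va] := eqVneq v a; first by rewrite swapv_l.
  by have [->|vb] := eqVneq v b; rewrite ?swapv_r ?swapv_id.
rewrite /sigmaT /sigma_par -relE; case: ifP => _ //.
by do 3 (case: ifP => _; first by rewrite ffunE).
Qed.

Lemma sigma_par_out xa xb v xv : v != a -> v != b ->
  sigma_par a b xa xb v xv = omap (sigma_ren a b xb) xv.
Proof.
move=> /negbTE va /negbTE vb; rewrite /sigma_par /sigma_ren /= va vb.
case: eqP => [->|_] //; case: eqP => [_|_]; first by case: xv.
by case: ifP => _ //; case: ifP.
Qed.

Lemma sigmaT_out p v : v != a -> v != b -> sigmaT a b p v = omap (sigma_ren a b (p b)) (p v).
Proof. by move=> va vb; rewrite sigmaT_par sigma_par_out. Qed.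

Lemma sigma_par_None xa xb v xv : a != b ->
  (sigma_par a b xa xb v xv == None) =
  ((if v == a then xb else if v == b then xa else xv) == None).
Proof.
move=> hab; rewrite /sigma_par /=.
have [->|va] := eqVneq v a; first rewrite (negbTE hab).
  by case: xa xb => [?|] [?|] /=; repeat (case: ifP => //=).
have [_|vb] := eqVneq v b.
  by case: xa xb => [?|] [?|] /=; repeat (case: ifP => //=).
by case: xa xb xv => [?|] [?|] [?|] /=; repeat (case: ifP => //=).
Qed.

Lemma sigma_ren_inj xb : injective (sigma_ren a b xb).
Proof. by rewrite /sigma_ren; case: ifP => _; [apply: inj_id | apply: swapv_inj]. Qed.

Lemma sigma_ren_id xb v : v != a -> v != b -> sigma_ren a b xb v = v.
Proof. by rewrite /sigma_ren => va vb; case: ifP => _ //; rewrite swapv_id. Qed.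

End LocalRule.

Section Cases.
Variables (n : nat) (a b : 'I_n) (p q : ptree n).
Hypotheses (hab : a != b) (hacyc : acyclic p).
Implicit Types (u v x : 'I_n).

Let hba : b != a. Proof. by rewrite eq_sym. Qed.

Section Relabel.
Hypothesis qE : forall u, q u = omap (swapv a b) (p (swapv a b u)).

Lemma acyclic_relabel : acyclic q.
Proof.
suff h v : fconnect (pstep q) (Some (swapv a b v)) None by move=> v; rewrite -(swapvK a b v).
elim/(acyclic_ind hacyc): v => v IH; rewrite fconnect_eqVf /= qE swapvK.
by case E: (p v) => [w|] //=; apply: IH; rewrite E connect0.
Qed.

Lemma desc_relabel x u : desc q x u = desc p (swapv a b x) (swapv a b u).
Proof.
move: u; apply: (desc_char (Phi := fun u => desc p (swapv a b x) (swapv a b u)) acyclic_relabel).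
move=> u.
rewrite desc_rec (inj_eq (@swapv_inj _ a b)) qE.
by case: (p (swapv a b u)) => [w|] //=; rewrite swapvK.
Qed.

End Relabel.

Section BChild.
Hypotheses (hb : p b = Some a)
  (qE : forall v, q v = if v == b then p a else if v == a then Some b else p v).

Let qa : q a = Some b. Proof. by rewrite qE (negbTE hab) eqxx. Qed.
Let qb : q b = p a. Proof. by rewrite qE eqxx. Qed.
Let qo v : v != a -> v != b -> q v = p v.
Proof. by move=> /negbTE va /negbTE vb; rewrite qE va vb. Qed.

Lemma acyclic_bchild : acyclic q.
Proof.
apply: acyclic_descent => // v; have [->|va] := eqVneq v a.
  by exists (p a); [apply: (fconnect_parent qa); rewrite -qb; apply: fconnect1 | apply: connect0].
have [->|vb] := eqVneq v b.
  by exists (p a); [rewrite -qb; apply: fconnect1 | rewrite hb; apply: fconnect1].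
by exists (p v); [rewrite -qo //; apply: fconnect1 | apply: connect0].
Qed.

Lemma desc_bchild_a u : desc q a u = desc p a u && ~~ desc p b u.
Proof.
move: u; apply: (desc_char (Phi := fun u => desc p a u && ~~ desc p b u) acyclic_bchild) => u.
have [->|ua] := eqVneq u a; first by rewrite desc_refl (parent_not_desc hacyc hb).
have [->|ub] := eqVneq u b.
  by rewrite desc_refl andbF qb; case E: (p a) => [w|] //=; rewrite (parent_not_desc hacyc E).
by rewrite qo // (desc_rec p a u) (desc_rec p b u) (negbTE ua) (negbTE ub); case: (p u).
Qed.

Lemma desc_bchild_b u : desc q b u = desc p a u.
Proof.
move: u; apply: (desc_char (Phi := desc p a) acyclic_bchild) => u.
have [->|ua] := eqVneq u a; first by rewrite desc_refl qa /= (desc_parent hb) orbT.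
have [->|ub] := eqVneq u b; first exact: desc_parent hb.
by rewrite qo // (desc_rec p a u) (negbTE ua).
Qed.

Lemma desc_bchild_out x u : x != a -> x != b -> desc q x u = desc p x u.
Proof.
move=> xa xb; move: u; apply: (desc_char (Phi := desc p x) acyclic_bchild) => u.
have [ax bx] : (a == x) = false /\ (b == x) = false.
  by rewrite !(eq_sym _ x) (negbTE xa) (negbTE xb).
have desc_ab : desc p x b = desc p x a by rewrite (desc_rec p x b) hb bx.
have [->|ua] := eqVneq u a; first by rewrite qa /= desc_ab (desc_rec p x a) ax.
have [->|ub] := eqVneq u b; first by rewrite qb desc_ab (desc_rec p x a) ax bx.
by rewrite qo // desc_rec.
Qed.

End BChild.

Section AChild.
Hypotheses (ha : p a = Some b) (hbN : p b != None)
  (qE : forall v, q v = if v == a then p b else if v == b then p b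
                        else omap (swapv a b) (p v)).

Let qa : q a = p b. Proof. by rewrite qE eqxx. Qed.
Let qb : q b = p b. Proof. by rewrite qE (negbTE hba) eqxx. Qed.
Let qo v : v != a -> v != b -> q v = omap (swapv a b) (p v).
Proof. by move=> /negbTE va /negbTE vb; rewrite qE va vb. Qed.
Let z := odflt a (p b).
Let hz : p b = Some z. Proof. by rewrite /z; case: (p b) hbN. Qed.
Let za : z != a.
Proof. by apply/eqP => eza; move: (desc_parent hz); rewrite eza (parent_not_desc hacyc ha). Qed.
Let zb : z != b. Proof. by apply/eqP => ezb; move: (parent_neq hacyc b); rewrite hz ezb eqxx. Qed.
Let desc_az : desc p a z = false.
Proof.
apply/negbTE; apply: contra za => /(desc_antisym hacyc) -> //.
exact: desc_trans (desc_parent hz) (desc_parent ha).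
Qed.

Lemma acyclic_achild : acyclic q.
Proof.
apply: acyclic_descent => // v; have [->|va] := eqVneq v a.
  by exists (p b); [rewrite -qa; apply: fconnect1 | rewrite ha; apply: fconnect1].
have [->|vb] := eqVneq v b; first by exists (p b); [rewrite -qb; apply: fconnect1 | apply: connect0].
have qv := qo va vb; case E: (p v) qv => [w|] /= qv; last first.
  by exists None; [rewrite -qv; apply: fconnect1 | apply: connect0].
have [ewa|wa] := eqVneq w a.
  exists (Some b); first by apply: (fconnect_parent qv); rewrite ewa swapv_l connect0.
  by rewrite ewa -ha; apply: fconnect1.
have [ewb|wb] := eqVneq w b.
  exists (p b); last by rewrite ewb; apply: fconnect1.
  by apply: (fconnect_parent qv); rewrite ewb swapv_r -qa fconnect1.
by exists (Some w); [apply: (fconnect_parent qv); rewrite swapv_id // connect0 | apply: connect0].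
Qed.

Lemma desc_achild_a u :
  desc q a u = desc p b (swapv a b u) && ~~ desc p a (swapv a b u).
Proof.
move: u; apply: (desc_char (Phi := fun u => desc p b (swapv a b u) && ~~ desc p a (swapv a b u))
  acyclic_achild) => u.
have [->|ua] := eqVneq u a; first by rewrite swapv_l desc_refl (parent_not_desc hacyc ha).
have [->|ub] := eqVneq u b.
  by rewrite swapv_r desc_refl andbF qb hz /= (swapv_id za zb) (parent_not_desc hacyc hz).
rewrite qo // swapv_id // (desc_rec p b u) (desc_rec p a u) (negbTE ua) (negbTE ub).
by case: (p u) => [w|] //=; rewrite swapvK.
Qed.

Lemma desc_achild_b u : desc q b u = desc p a (swapv a b u).
Proof.
move: u; apply: (desc_char (Phi := fun u => desc p a (swapv a b u)) acyclic_achild) => u.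
have [->|ua] := eqVneq u a.
  by rewrite swapv_l (parent_not_desc hacyc ha) qa hz /= (swapv_id za zb) desc_az (negbTE hab).
have [->|ub] := eqVneq u b; first by rewrite swapv_r desc_refl.
rewrite qo // swapv_id // (desc_rec p a u) (negbTE ua).
by case: (p u) => [w|] //=; rewrite swapvK.
Qed.

Lemma desc_achild_out x u : x != a -> x != b -> desc q x u = desc p x u.
Proof.
move=> xa xb; move: u; apply: (desc_char (Phi := desc p x) acyclic_achild) => u.
have [ax bx] : (a == x) = false /\ (b == x) = false.
  by rewrite !(eq_sym _ x) (negbTE xa) (negbTE xb).
have desc_ab : desc p x a = desc p x b by rewrite (desc_rec p x a) ha ax.
have [->|ua] := eqVneq u a; first by rewrite qa desc_ab (desc_rec p x b) ax bx.
have [->|ub] := eqVneq u b; first by rewrite qb desc_rec.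
rewrite qo // desc_rec; case: (p u) => [w|] //=.
have [->|wa] := eqVneq w a; first by rewrite swapv_l desc_ab.
by have [->|wb] := eqVneq w b; rewrite ?swapv_r ?desc_ab ?swapv_id.
Qed.

End AChild.

Section Sibling.
Hypotheses (e : p a = p b) (hbN : p b != None)
  (qE : forall v, q v = if v == b then Some a else if v == a then p a
                        else omap (swapv a b) (p v)).

Let qa : q a = p a. Proof. by rewrite qE (negbTE hab) eqxx. Qed.
Let qb : q b = Some a. Proof. by rewrite qE eqxx. Qed.
Let qo v : v != a -> v != b -> q v = omap (swapv a b) (p v).
Proof. by move=> /negbTE va /negbTE vb; rewrite qE va vb. Qed.
Let z := odflt a (p b).
Let hzb : p b = Some z. Proof. by rewrite /z; case: (p b) hbN. Qed.
Let hza : p a = Some z. Proof. by rewrite e. Qed.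
Let desc_az : desc p a z = false.
Proof. exact: (parent_not_desc hacyc hza). Qed.
Let desc_ab : desc p a b = false. Proof. by rewrite desc_rec hzb /= desc_az (negbTE hba). Qed.

Lemma acyclic_sibling : acyclic q.
Proof.
apply: acyclic_descent => // v; have [->|va] := eqVneq v a.
  by exists (p a); [rewrite -qa; apply: fconnect1 | apply: connect0].
have [->|vb] := eqVneq v b.
  by exists (p a); [apply: (fconnect_parent qb); rewrite -qa fconnect1 | rewrite e connect0].
have qv := qo va vb; case E: (p v) qv => [w|] /= qv; last first.
  by exists None; [rewrite -qv; apply: fconnect1 | apply: connect0].
have [ewa|wa] := eqVneq w a.
  exists (p a); last by rewrite ewa; apply: fconnect1.
  apply: (fconnect_parent qv); rewrite ewa swapv_l.
  by apply: (fconnect_parent qb); rewrite -qa fconnect1.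
have [ewb|wb] := eqVneq w b.
  exists (p a); last by rewrite ewb e; apply: fconnect1.
  by apply: (fconnect_parent qv); rewrite ewb swapv_r -qa fconnect1.
by exists (Some w); [apply: (fconnect_parent qv); rewrite swapv_id // connect0 | apply: connect0].
Qed.

Lemma desc_sibling_a u : desc q a u = desc p a u || desc p b u.
Proof.
move: u; apply: (desc_char (Phi := fun u => desc p a u || desc p b u) acyclic_sibling) => u.
have [->|ua] := eqVneq u a; first by rewrite desc_refl.
have [->|ub] := eqVneq u b; first by rewrite qb /= !desc_refl orbT.
rewrite qo // (desc_rec p a u) (desc_rec p b u) (negbTE ua) (negbTE ub).
case: (p u) => [w|] //=.
have [->|wa] := eqVneq w a; first by rewrite swapv_l !desc_refl orbT.
by have [->|wb] := eqVneq w b; rewrite ?swapv_r ?desc_refl ?orbT ?swapv_id.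
Qed.

Lemma desc_sibling_b u : desc q b u = desc p a (swapv a b u).
Proof.
move: u; apply: (desc_char (Phi := fun u => desc p a (swapv a b u)) acyclic_sibling) => u.
have [->|ua] := eqVneq u a.
  rewrite swapv_l desc_ab qa hza /= (negbTE hab) swapv_id ?desc_az //.
  - by apply/eqP => eza; move: desc_az; rewrite eza desc_refl.
  - by apply/eqP => ezb; move: (parent_neq hacyc b); rewrite hzb ezb eqxx.
have [->|ub] := eqVneq u b; first by rewrite swapv_r desc_refl.
rewrite qo // swapv_id // (desc_rec p a u) (negbTE ua).
by case: (p u) => [w|] //=; rewrite swapvK.
Qed.

Lemma desc_sibling_out x u : x != a -> x != b -> desc q x u = desc p x u.
Proof.
move=> xa xb; move: u; apply: (desc_char (Phi := desc p x) acyclic_sibling) => u.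
have [ax bx] : (a == x) = false /\ (b == x) = false.
  by rewrite !(eq_sym _ x) (negbTE xa) (negbTE xb).
have desc_xab : desc p x a = desc p x b by rewrite (desc_rec p x a) (desc_rec p x b) e ax bx.
have [->|ua] := eqVneq u a; first by rewrite qa desc_rec.
have [->|ub] := eqVneq u b; first by rewrite qb /= desc_xab bx.
rewrite qo // desc_rec; case: (p u) => [w|] //=.
have [->|wa] := eqVneq w a; first by rewrite swapv_l desc_xab.
by have [->|wb] := eqVneq w b; rewrite ?swapv_r ?desc_xab ?swapv_id.
Qed.

End Sibling.

End Cases.

Section SigmaT.
Variables (n : nat) (a b : 'I_n) (p : ptree n).
Local Notation q := (sigmaT a b p).

Variant sigmaT_spec : Prop :=
  | SigmaRoot of p b = None & (forall u, q u = omap (swapv a b) (p (swapv a b u)))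
  | SigmaBChild of p b = Some a &
      (forall v, q v = if v == b then p a else if v == a then Some b else p v)
  | SigmaAChild of p a = Some b & p b != None &
      (forall v, q v = if v == a then p b else if v == b then p b
                       else omap (swapv a b) (p v))
  | SigmaSibling of p a = p b & p b != None &
      (forall v, q v = if v == b then Some a else if v == a then p a
                       else omap (swapv a b) (p v))
  | SigmaSwap of p b != None & p b != Some a & p a != Some b & p a != p b &
      (forall u, q u = omap (swapv a b) (p (swapv a b u))).

Lemma sigmaTP : sigmaT_spec.
Proof.
have [hb|hbN] := eqVneq (p b) None.
  by apply: SigmaRoot => // u; rewrite /sigmaT hb relabelE.
have [hba|hba] := eqVneq (p b) (Some a).
  by apply: SigmaBChild => // v; rewrite /sigmaT (negbTE hbN) hba eqxx ffunE.
have [ha|ha] := eqVneq (p a) (Some b).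
  by apply: SigmaAChild => // v; rewrite /sigmaT (negbTE hbN) (negbTE hba) ha eqxx ffunE.
have [e|e] := eqVneq (p a) (p b).
  by apply: SigmaSibling => // v; rewrite /sigmaT (negbTE hbN) (negbTE hba) (negbTE ha) e eqxx ffunE.
apply: SigmaSwap => // u.
by rewrite /sigmaT (negbTE hbN) (negbTE hba) (negbTE ha) (negbTE e) relabelE.
Qed.

Hypothesis hab : a != b.

Lemma acyclic_sigmaT : acyclic p -> acyclic q.
Proof.
move=> hacyc; case: sigmaTP => [_ qE|hb qE|ha hbN qE|e hbN qE|_ _ _ _ qE].
- exact: acyclic_relabel qE.
- exact: acyclic_bchild qE.
- exact: acyclic_achild qE.
- exact: acyclic_sibling qE.
- exact: acyclic_relabel qE.
Qed.

Lemma sigmaT_tree : is_tree p -> is_tree q.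
Proof.
case/is_treeP => [[r hr] hacyc]; apply/is_treeP; split; last exact: acyclic_sigmaT.
exists (swapv a b r) => v; rewrite sigmaT_par sigma_par_None //.
have -> : (if v == a then p b else if v == b then p a else p v) = p (swapv a b v).
  by rewrite /swapv; case: (v == a) => //; case: (v == b).
by rewrite hr -{1}(swapvK a b r) (inj_eq (@swapv_inj _ a b)).
Qed.

End SigmaT.

(** * Subtree sizes *)

Definition subtree_size n (p : ptree n) (x : 'I_n) := #|[set u | desc p x u]|.

Section Cardinals.
Variable T : finType.
Implicit Types P Q : pred T.

Lemma card_set_eq P Q : P =1 Q -> #|[set u | P u]| = #|[set u | Q u]|.
Proof. by move=> e; apply: eq_card => u; rewrite !inE e. Qed.

Lemma card_set_inj (f : T -> T) P : injective f -> #|[set u | P (f u)]| = #|[set u | P u]|.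
Proof.
move=> f_inj; have -> : [set u | P (f u)] = f @^-1: [set u | P u].
  by apply/setP => u; rewrite !inE.
exact: card_preimset.
Qed.

Lemma card_setD P Q : (forall u, Q u -> P u) ->
  #|[set u | P u && ~~ Q u]| + #|[set u | Q u]| = #|[set u | P u]|.
Proof.
move=> QP; rewrite -cardsUI; have -> : [set u | P u && ~~ Q u] :&: [set u | Q u] = set0.
  by apply/setP => u; rewrite !inE -andbA andNb andbF.
rewrite cards0 addn0; apply: eq_card => u; rewrite !inE.
by case: (boolP (Q u)) => [/QP ->|]; rewrite ?orbT ?orbF ?andbT.
Qed.

Lemma card_setU P Q : (forall u, P u -> Q u -> False) ->
  #|[set u | P u || Q u]| = #|[set u | P u]| + #|[set u | Q u]|.
Proof.
move=> PQ; rewrite -cardsUI; have -> : [set u | P u] :&: [set u | Q u] = set0.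
  by apply/setP => u; rewrite !inE; apply/negbTE/andP => -[/PQ].
by rewrite cards0 addn0; apply: eq_card => u; rewrite !inE.
Qed.

End Cardinals.

Section SubtreeSize.
Variables (n : nat) (a b : 'I_n) (p : ptree n).
Hypotheses (hab : a != b) (hacyc : acyclic p).
Local Notation q := (sigmaT a b p).

Lemma subtree_size_relabel (q' : ptree n) x :
  (forall u, q' u = omap (swapv a b) (p (swapv a b u))) ->
  subtree_size q' x = subtree_size p (swapv a b x).
Proof.
move=> qE; rewrite /subtree_size (card_set_eq (desc_relabel hacyc qE x)).
exact: (card_set_inj (desc p (swapv a b x)) (@swapv_inj _ a b)).
Qed.

Lemma subtree_size_sigmaT_out x : x != a -> x != b -> subtree_size q x = subtree_size p x.
Proof.
move=> xa xb; case: (sigmaTP a b p) => [_ qE|hb qE|ha _ qE|e _ qE|_ _ _ _ qE].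
- by rewrite (subtree_size_relabel _ qE) swapv_id.
- exact: card_set_eq (fun u => desc_bchild_out hab hacyc hb qE u xa xb).
- exact: card_set_eq (fun u => desc_achild_out hab hacyc ha qE u xa xb).
- exact: card_set_eq (fun u => desc_sibling_out hab hacyc e qE u xa xb).
- by rewrite (subtree_size_relabel _ qE) swapv_id.
Qed.

Lemma subtree_size_sigmaT_b : subtree_size q b = subtree_size p a.
Proof.
have swap_size P : #|[set u | P (swapv a b u)]| = #|[set u | P u]|.
  exact: card_set_inj P (@swapv_inj _ a b).
case: (sigmaTP a b p) => [_ qE|hb qE|ha hbN qE|e hbN qE|_ _ _ _ qE].
- by rewrite (subtree_size_relabel _ qE) swapv_r.
- exact: card_set_eq (desc_bchild_b hab hacyc hb qE).
- by rewrite /subtree_size (card_set_eq (desc_achild_b hab hacyc ha hbN qE)) swap_size.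
- by rewrite /subtree_size (card_set_eq (desc_sibling_b hab hacyc e hbN qE)) swap_size.
- by rewrite (subtree_size_relabel _ qE) swapv_r.
Qed.

Lemma siblings_not_desc y y' z : p y = Some z -> p y' = Some z -> y != y' -> desc p y y' = false.
Proof.
by move=> hy hy' yy'; rewrite desc_rec hy' eq_sym (negbTE yy') /= (parent_not_desc hacyc hy).
Qed.

Variable R : nzRingType.
Local Notation sz p x := ((subtree_size p x)%:R : R)%R.

Lemma subtree_size_sigmaT_a : sz q a = size_par a b (p a) (p b) (sz p a) (sz p b) a (sz p a).
Proof.
have swap_size P : #|[set u | P (swapv a b u)]| = #|[set u | P u]|.
  exact: card_set_inj P (@swapv_inj _ a b).
rewrite /size_par eqxx; case: (sigmaTP a b p) => [hb qE|hb qE|ha hbN qE|e hbN qE|hbN hba ha e qE].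
- by rewrite hb eqxx (subtree_size_relabel _ qE) swapv_l.
- rewrite hb /= eqxx /subtree_size (card_set_eq (desc_bchild_a hab hacyc hb qE)).
  rewrite -(card_setD (P := desc p a) (Q := desc p b)) ?natrD ?addrK //.
  by move=> u; apply: desc_trans (desc_parent hb).
- have hba : (p b == Some a) = false.
    by apply/eqP => hb; move: (parent_not_desc hacyc ha); rewrite (desc_parent hb).
  rewrite (negbTE hbN) hba ha eqxx /subtree_size (card_set_eq (desc_achild_a hab hacyc ha hbN qE)).
  rewrite (swap_size (fun u => desc p b u && ~~ desc p a u)).
  rewrite -(card_setD (P := desc p b) (Q := desc p a)) ?natrD ?addrK //.
  by move=> u; apply: desc_trans (desc_parent ha).
- have [z hz] : exists z, p b = Some z by case: (p b) hbN => [z|] // _; exists z.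
  have hza : p a = Some z by rewrite e.
  have [hba hab'] : (p b == Some a) = false /\ (p a == Some b) = false.
    split; apply/eqP => h; first by move: (parent_neq hacyc a); rewrite e h eqxx.
    by move: (parent_neq hacyc b); rewrite -e h eqxx.
  rewrite (negbTE hbN) hba hab' e eqxx /subtree_size (card_set_eq (desc_sibling_a hab hacyc e qE)).
  rewrite card_setU ?natrD // => u hau hbu.
  by case/orP: (desc_total hau hbu); rewrite (siblings_not_desc (z := z)) // eq_sym.
- by rewrite (negbTE hbN) (negbTE hba) (negbTE ha) (negbTE e) (subtree_size_relabel _ qE) swapv_l.
Qed.

Lemma subtree_size_sigmaT x :
  sz q x = size_par a b (p a) (p b) (sz p a) (sz p b) x (sz p x).
Proof.
have [->|xa] := eqVneq x a; first exact: subtree_size_sigmaT_a.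
rewrite /size_par (negbTE xa); have [->|xb] := eqVneq x b; first by rewrite subtree_size_sigmaT_b.
by rewrite subtree_size_sigmaT_out.
Qed.

End SubtreeSize.

(** * Transport along injective encodings *)

(* The rule acting on plain functions, which unlike [{ffun _}] reduce under [vm_compute]. *)
Section LocalCalculus.
Variables (n : nat) (R : zmodType).
Implicit Types (a b c : 'I_n) (f : 'I_n -> option 'I_n) (s : 'I_n -> R).

Definition sigma_fun a b f : 'I_n -> option 'I_n := fun v => sigma_par a b (f a) (f b) v (f v).

Definition size_fun a b f s : 'I_n -> R := fun x => size_par a b (f a) (f b) (s a) (s b) x (s x).

Definition weight_inc a b f s : R := if (f b == None) && (f a == Some b) then s a else 0%R.

Definition sigma_fun3 a b c d f := sigma_fun a b (sigma_fun c d (sigma_fun a b f)).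

Definition weight_inc3 a b c d f s : R :=
  weight_inc a b f s + weight_inc c d (sigma_fun a b f) (size_fun a b f s) +
  weight_inc a b (sigma_fun c d (sigma_fun a b f))
    (size_fun c d (sigma_fun a b f) (size_fun a b f s)).

Definition acyclic2 f a b :=
  [&& f a != Some a, f b != Some b & ~~ ((f a == Some b) && (f b == Some a))].

Definition acyclic3 f a b c :=
  [&& acyclic2 f a b, acyclic2 f b c, acyclic2 f a c,
      ~~ [&& f a == Some b, f b == Some c & f c == Some a] &
      ~~ [&& f a == Some c, f c == Some b & f b == Some a]].

Lemma eq_sigma_fun a b f f' : f =1 f' -> sigma_fun a b f =1 sigma_fun a b f'.
Proof. by move=> e v; rewrite /sigma_fun !e. Qed.

Lemma eq_size_fun a b f f' s s' : f =1 f' -> s =1 s' -> size_fun a b f s =1 size_fun a b f' s'.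
Proof. by move=> e e' v; rewrite /size_fun !e !e'. Qed.

Lemma eq_weight_inc a b f f' s s' : f =1 f' -> s =1 s' -> weight_inc a b f s = weight_inc a b f' s'.
Proof. by move=> e e'; rewrite /weight_inc !e !e'. Qed.

Lemma sigmaT_fun a b (p : ptree n) : sigmaT a b p =1 sigma_fun a b p.
Proof. exact: sigmaT_par. Qed.

Lemma sigmaT_fun3 a b c d (p : ptree n) :
  sigmaT a b (sigmaT c d (sigmaT a b p)) =1 sigma_fun3 a b c d p.
Proof.
move=> v; rewrite sigmaT_fun; apply: eq_sigma_fun => {}v.
by rewrite sigmaT_fun; apply: eq_sigma_fun; apply: sigmaT_fun.
Qed.

End LocalCalculus.

Section TreeShortCycles.
Variables (n : nat) (p : ptree n).
Hypothesis hacyc : acyclic p.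

Lemma acyclic2_tree a b : acyclic2 p a b.
Proof.
rewrite /acyclic2 !parent_neq //=; apply/negP => /andP [/eqP hab /eqP hba].
by move: (parent_not_desc hacyc hab); rewrite (desc_parent hba).
Qed.

Lemma acyclic3_tree a b c : acyclic3 p a b c.
Proof.
rewrite /acyclic3 !acyclic2_tree //=.
have no3 x y z : ~~ [&& p x == Some y, p y == Some z & p z == Some x].
  apply/negP => /and3P [/eqP hxy /eqP hyz /eqP hzx].
  by move: (parent_not_desc hacyc hxy); rewrite (desc_trans (desc_parent hzx) (desc_parent hyz)).
by rewrite !no3.
Qed.

End TreeShortCycles.

Definition opt_in n (V : {pred 'I_n}) : pred (option 'I_n) :=
  fun o => if o is Some w then w \in V else true.

Section Transport.
Variables (n m : nat) (g : 'I_n -> 'I_m) (V : {pred 'I_n}).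
Hypothesis g_inj : {in V &, injective g}.
Implicit Types (a b v : 'I_n) (x y : option 'I_n).

Lemma eq_map_in u w : u \in V -> w \in V -> (g u == g w) = (u == w).
Proof. by move=> hu hw; apply/eqP/eqP => [/g_inj|->]; [apply|]. Qed.

Lemma eq_omap_in x y : opt_in V x -> opt_in V y -> (omap g x == omap g y) = (x == y).
Proof. by case: x y => [u|] [w|] //= hu hw; rewrite !eqE /= eq_map_in. Qed.

Lemma eq_omap_Some_in x a : opt_in V x -> a \in V -> (omap g x == Some (g a)) = (x == Some a).
Proof. by move=> hx ha; rewrite -[Some (g a)]/(omap g (Some a)) eq_omap_in. Qed.

Lemma omap_eqNone x : (omap g x == None) = (x == None).
Proof. by case: x. Qed.

Lemma swapv_in a b v : a \in V -> b \in V -> v \in V -> swapv a b v \in V.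
Proof. by rewrite /swapv => ha hb hv; case: ifP => _ //; case: ifP. Qed.

Lemma swapv_map a b v : a \in V -> b \in V -> v \in V ->
  g (swapv a b v) = swapv (g a) (g b) (g v).
Proof. by move=> ha hb hv; rewrite /swapv !eq_map_in //; case: ifP => _ //; case: ifP. Qed.

Lemma opt_in_swapv a b x : a \in V -> b \in V -> opt_in V x -> opt_in V (omap (swapv a b) x).
Proof. by move=> ha hb; case: x => //= w; apply: swapv_in. Qed.

Lemma omap_swapv_map a b x : a \in V -> b \in V -> opt_in V x ->
  omap g (omap (swapv a b) x) = omap (swapv (g a) (g b)) (omap g x).
Proof. by move=> ha hb; case: x => //= w hw; rewrite swapv_map. Qed.

Section LocalRule.
Variables (a b : 'I_n) (xa xb : option 'I_n).
Hypotheses (ha : a \in V) (hb : b \in V) (hxa : opt_in V xa) (hxb : opt_in V xb).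

Lemma sigma_par_map v xv : v \in V -> opt_in V xv ->
  sigma_par (g a) (g b) (omap g xa) (omap g xb) (g v) (omap g xv) =
  omap g (sigma_par a b xa xb v xv).
Proof.
move=> hv hxv; rewrite /sigma_par /= !omap_eqNone !eq_omap_Some_in // eq_omap_in //.
by rewrite !eq_map_in // -!omap_swapv_map // !(fun_if (omap g)).
Qed.

Lemma sigma_par_in v xv : opt_in V xv -> opt_in V (sigma_par a b xa xb v xv).
Proof. by move=> hxv; rewrite /sigma_par /=; repeat case: ifP => _; rewrite ?opt_in_swapv. Qed.

Lemma size_par_map (R : zmodType) (sa sb : R) (x : 'I_n) (sx : R) : x \in V ->
  size_par (g a) (g b) (omap g xa) (omap g xb) sa sb (g x) sx = size_par a b xa xb sa sb x sx.
Proof.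
by move=> hx; rewrite /size_par !omap_eqNone !eq_omap_Some_in // eq_omap_in // !eq_map_in.
Qed.

End LocalRule.
End Transport.

Section Agreement.
Variables (n m : nat) (g : 'I_n -> 'I_m) (V : {pred 'I_n}) (U : seq 'I_n).
Hypotheses (g_inj : {in V &, injective g}) (UV : {subset U <= V}).
Implicit Types (f : 'I_n -> option 'I_n) (h : 'I_m -> option 'I_m).

Definition agree f h := {in U, forall u, opt_in V (f u) /\ h (g u) = omap g (f u)}.

Definition size_agree (R : Type) (s : 'I_n -> R) (t : 'I_m -> R) := {in U, forall u, t (g u) = s u}.

Lemma agree_sigma_fun a b f h : a \in U -> b \in U -> agree f h ->
  agree (sigma_fun a b f) (sigma_fun (g a) (g b) h).
Proof.
move=> ha hb hfh u hu; have [ina ga] := hfh a ha; have [inb gb] := hfh b hb.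
have [inu gu] := hfh u hu; split; first by rewrite /sigma_fun; apply: sigma_par_in; rewrite ?UV.
by rewrite /sigma_fun ga gb gu (sigma_par_map g_inj) ?UV.
Qed.

Lemma size_agree_size_fun (R : zmodType) a b f h (s : 'I_n -> R) t : a \in U -> b \in U ->
  agree f h -> size_agree s t -> size_agree (size_fun a b f s) (size_fun (g a) (g b) h t).
Proof.
move=> ha hb hfh hst u hu; have [ina ga] := hfh a ha; have [inb gb] := hfh b hb.
by rewrite /size_fun ga gb !hst // (size_par_map g_inj) ?UV.
Qed.

Lemma weight_inc_agree (R : zmodType) a b f h (s : 'I_n -> R) t : a \in U -> b \in U ->
  agree f h -> size_agree s t -> weight_inc (g a) (g b) h t = weight_inc a b f s.
Proof.
move=> ha hb hfh hst; have [ina ga] := hfh a ha; have [inb gb] := hfh b hb.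
by rewrite /weight_inc ga gb hst // omap_eqNone (eq_omap_Some_in g_inj) ?UV.
Qed.

Lemma agree_sigma_fun3 a b c d f h : a \in U -> b \in U -> c \in U -> d \in U ->
  agree f h -> agree (sigma_fun3 a b c d f) (sigma_fun3 (g a) (g b) (g c) (g d) h).
Proof. by move=> ha hb hc hd hfh; do 3 apply: agree_sigma_fun => //. Qed.

Lemma weight_inc3_agree (R : zmodType) a b c d f h (s : 'I_n -> R) t :
  a \in U -> b \in U -> c \in U -> d \in U -> agree f h -> size_agree s t ->
  weight_inc3 (g a) (g b) (g c) (g d) h t = weight_inc3 a b c d f s.
Proof.
move=> ha hb hc hd hfh hst.
have h1 := agree_sigma_fun ha hb hfh; have s1 := size_agree_size_fun ha hb hfh hst.
by rewrite /weight_inc3 (weight_inc_agree ha hb hfh hst) (weight_inc_agree hc hd h1 s1)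
  (weight_inc_agree ha hb (agree_sigma_fun hc hd h1) (size_agree_size_fun hc hd h1 s1)).
Qed.

Lemma acyclic2_agree a b f h : a \in U -> b \in U -> agree f h ->
  acyclic2 h (g a) (g b) = acyclic2 f a b.
Proof.
move=> ha hb hfh; have [ina ga] := hfh a ha; have [inb gb] := hfh b hb.
by rewrite /acyclic2 ga gb !(eq_omap_Some_in g_inj) ?UV.
Qed.

Lemma acyclic3_agree a b c f h : a \in U -> b \in U -> c \in U -> agree f h ->
  acyclic3 h (g a) (g b) (g c) = acyclic3 f a b c.
Proof.
move=> ha hb hc hfh; have [ina ga] := hfh a ha; have [inb gb] := hfh b hb.
have [inc gc] := hfh c hc.
rewrite /acyclic3 (acyclic2_agree ha hb hfh) (acyclic2_agree hb hc hfh) (acyclic2_agree ha hc hfh).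
by rewrite ga gb gc !(eq_omap_Some_in g_inj) ?UV.
Qed.

Lemma agree_inj f f' h h' u : u \in U -> agree f h -> agree f' h' ->
  h (g u) = h' (g u) -> f u = f' u.
Proof.
move=> hu hfh hfh'; have [inu ->] := hfh u hu; have [inu' ->] := hfh' u hu.
by move/eqP; rewrite (eq_omap_in g_inj) // => /eqP.
Qed.

End Agreement.

Section Encoding.
Variables (n m : nat).
Implicit Types (s U W : seq 'I_n) (f : 'I_n -> option 'I_n).

Definition enc s (v : 'I_n) : 'I_m.+1 := inord (index v s).

Lemma enc_index s v (k : 'I_m.+1) : index v s = k -> enc s v = k.
Proof. by move=> e; rewrite /enc e inord_val. Qed.

Lemma enc_inj s : size s <= m.+1 -> {in s &, injective (enc s)}.
Proof.
move=> hs u w hu hw /(congr1 (@nat_of_ord _)).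
rewrite /enc !inordK ?(leq_trans _ hs) ?index_mem // => e.
by rewrite -(nth_index u hu) e nth_index.
Qed.

Definition picture (g : 'I_n -> 'I_m.+1) U f (k : 'I_m.+1) : option 'I_m.+1 :=
  nth None [seq omap g (f u) | u <- U] k.

Definition size_picture (R : zmodType) U (t : 'I_n -> R) (k : 'I_m.+1) : R :=
  nth 0%R [seq t u | u <- U] k.

Section Prefix.
Variables (U W : seq 'I_n).
Hypothesis hUW : size (U ++ W) <= m.+1.
Local Notation g := (enc (U ++ W)).

Lemma enc_prefix u : u \in U -> g u = index u U :> nat.
Proof.
move=> hu; have lt_u : index u (U ++ W) < m.+1.
  by rewrite (leq_trans _ hUW) // index_mem mem_cat hu.
by rewrite /enc inordK // index_cat hu.
Qed.

Lemma agree_picture f : {in U, forall u, opt_in (mem (U ++ W)) (f u)} ->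
  agree g (mem (U ++ W)) U f (picture g U f).
Proof.
move=> hf u hu; split; first exact: hf.
by rewrite /picture enc_prefix // (nth_map u) ?index_mem // nth_index.
Qed.

Lemma size_agree_picture (R : zmodType) (t : 'I_n -> R) : size_agree g U t (size_picture U t).
Proof. by move=> u hu; rewrite /size_picture enc_prefix // (nth_map u) ?index_mem // nth_index. Qed.

End Prefix.
End Encoding.

(** * The braid relation *)

(* [ord_enum] goes through the opaque [idP]; this enumeration reduces under [vm_compute]. *)
Definition ords n : seq 'I_n := pmap (@insub_eq _ _ 'I_n) (iota 0 n).

Definition opts n : seq (option 'I_n) := None :: map Some (ords n).

Lemma mem_ords n (k : 'I_n) : k \in ords n.
Proof. by rewrite /ords (eq_pmap (@insub_eqE _ _ 'I_n)) mem_ord_enum. Qed.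

Lemma mem_opts n (o : option 'I_n) : o \in opts n.
Proof. by case: o => [k|] //; rewrite inE /= mem_map ?mem_ords //; apply: Some_inj. Qed.

Definition o0 {m} : 'I_m.+3 := @Ordinal m.+3 0 isT.
Definition o1 {m} : 'I_m.+3 := @Ordinal m.+3 1 isT.
Definition o2 {m} : 'I_m.+3 := @Ordinal m.+3 2 isT.

Lemma braid_model_check : all (fun x0 => all (fun x1 => all (fun x2 => all (fun x3 =>
    let h := nth None [:: x0; x1; x2; x3] in
    acyclic3 h o0 o1 o2 ==>
    all (fun k => sigma_fun3 o0 o1 o1 o2 h k == sigma_fun3 o1 o2 o0 o1 h k) (ords 8))
  (opts 8)) (opts 8)) (opts 8)) (opts 8).
Proof. by vm_compute. Qed.

Lemma braid_model (x0 x1 x2 x3 : option 'I_8) (h := nth None [:: x0; x1; x2; x3]) :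
  acyclic3 h o0 o1 o2 -> sigma_fun3 o0 o1 o1 o2 h =1 sigma_fun3 o1 o2 o0 o1 h.
Proof.
move=> hacyc k; apply/eqP; move: braid_model_check.
move=> /allP /(_ x0 (mem_opts x0)) /allP /(_ x1 (mem_opts x1)).
move=> /allP /(_ x2 (mem_opts x2)) /allP /(_ x3 (mem_opts x3)).
by move=> /implyP /(_ hacyc) /allP /(_ k (mem_ords k)).
Qed.

Section TreePicture.
Variables (n m : nat) (p : ptree n).

Lemma agree_tree_picture (U W : seq 'I_n) :
  {subset [seq odflt u (p u) | u <- U] <= W} -> size (U ++ W) <= m.+1 ->
  agree (enc m (U ++ W)) (mem (U ++ W)) U p (picture (enc m (U ++ W)) U p).
Proof.
move=> hW hUW; apply: agree_picture => // u hu; case E: (p u) => [w|] //.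
change (w \in U ++ W); rewrite mem_cat hW ?orbT //.
by apply/mapP; exists u; rewrite ?E.
Qed.

Lemma enc_heads (a b c : 'I_n) s : a != b -> b != c -> a != c ->
  let g := enc m.+2 [:: a, b, c & s] in [/\ g a = o0, g b = o1 & g c = o2].
Proof.
move=> hab hbc hac; split; apply: enc_index.
all: by rewrite /= ?eqxx ?(negbTE hab) ?(negbTE hbc) ?(negbTE hac).
Qed.

End TreePicture.

Section Braid.
Variables (n : nat) (a b c : 'I_n).
Hypotheses (hab : a != b) (hbc : b != c) (hac : a != c).

(* Both sides at [v] only involve the parents of [a], [b], [c] and [v], so they can
   be compared on an eight-vertex picture. *)
Lemma braid_sigmaT p : acyclic p ->
  sigmaT a b (sigmaT b c (sigmaT a b p)) = sigmaT b c (sigmaT a b (sigmaT b c p)).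
Proof.
move=> hacyc; apply/ffunP => v; rewrite !sigmaT_fun3.
pose U := [:: a; b; c; v]; pose W := [seq odflt u (p u) | u <- U].
pose g := enc 7 (U ++ W); have g_inj : {in U ++ W &, injective g} by apply: enc_inj.
have UV : {subset U <= mem (U ++ W)} by move=> u hu; rewrite mem_cat hu.
have pic : agree g (mem (U ++ W)) U p (picture g U p) by apply: agree_tree_picture.
have [ga gb gc] : [/\ g a = o0, g b = o1 & g c = o2] := @enc_heads n 5 a b c (v :: W) hab hbc hac.
have [ha hb hc hv] : [/\ a \in U, b \in U, c \in U & v \in U] by rewrite !inE !eqxx !orbT.
apply: (agree_inj g_inj hv (agree_sigma_fun3 g_inj UV ha hb hb hc pic)
  (agree_sigma_fun3 g_inj UV hb hc ha hb pic)); rewrite ga gb gc.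
apply: (@braid_model (omap g (p a)) (omap g (p b)) (omap g (p c)) (omap g (p v))).
by rewrite -ga -gb -gc (acyclic3_agree g_inj UV ha hb hc pic) acyclic3_tree.
Qed.

End Braid.

Lemma weight_model (R : comNzRingType) (x0 x1 x2 : option 'I_6) (s0 s1 s2 : R)
    (h := nth None [:: x0; x1; x2]) (t := nth 0%R [:: s0; s1; s2]) :
  acyclic3 h o0 o1 o2 -> weight_inc3 o0 o1 o1 o2 h t = weight_inc3 o1 o2 o0 o1 h t.
Proof.
rewrite {}/h {}/t.
case: x0 => [[[|[|[|[|[|[|?]]]]]] ?]|] //; case: x1 => [[[|[|[|[|[|[|?]]]]]] ?]|] //;
  case: x2 => [[[|[|[|[|[|[|?]]]]]] ?]|] //;
  rewrite /acyclic3 /acyclic2 /weight_inc3 /weight_inc /size_fun /size_par /sigma_fun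
    /sigma_par /swapv /= => // _; ring.
Qed.

Lemma weight_braid (R : comNzRingType) n (a b c : 'I_n) (p : ptree n) (s : 'I_n -> R) :
  a != b -> b != c -> a != c -> acyclic p -> weight_inc3 a b b c p s = weight_inc3 b c a b p s.
Proof.
move=> hab hbc hac hacyc.
pose U := [:: a; b; c]; pose W := [seq odflt u (p u) | u <- U].
have hUW : size (U ++ W) <= 6 by [].
pose g := enc 5 (U ++ W); have g_inj : {in U ++ W &, injective g} by apply: enc_inj.
have UV : {subset U <= mem (U ++ W)} by move=> u hu; rewrite mem_cat hu.
have pic : agree g (mem (U ++ W)) U p (picture g U p) by apply: agree_tree_picture.
have spic : size_agree g U s (size_picture U s) by apply: size_agree_picture.
have [ga gb gc] : [/\ g a = o0, g b = o1 & g c = o2] := @enc_heads n 3 a b c W hab hbc hac.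
have [ha hb hc] : [/\ a \in U, b \in U & c \in U] by rewrite !inE !eqxx !orbT.
rewrite -(weight_inc3_agree g_inj UV ha hb hb hc pic spic).
rewrite -(weight_inc3_agree g_inj UV hb hc ha hb pic spic) ga gb gc.
apply: (@weight_model R (omap g (p a)) (omap g (p b)) (omap g (p c)) (s a) (s b) (s c)).
by rewrite -ga -gb -gc (acyclic3_agree g_inj UV ha hb hc pic) acyclic3_tree.
Qed.

Section AugmentedBraid.
Variable n : nat.
Implicit Types (a b c d : 'I_n) (p : ptree n) (e : 'Z_n).

Definition sizes p : 'I_n -> 'Z_n := fun x => ((subtree_size p x)%:R)%R.

Lemma tree_acyclic p : is_tree p -> acyclic p.
Proof. by case/is_treeP. Qed.

Lemma sizes_sigmaT a b p : a != b -> acyclic p -> sizes (sigmaT a b p) =1 size_fun a b p (sizes p).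
Proof. by move=> hab hacyc x; apply: subtree_size_sigmaT. Qed.

Lemma wbar_root a b p : a != b -> is_tree p -> p b = None ->
  wbar p a = if p a == Some b then subtree_size p a else 0.
Proof.
move=> hab /is_treeP [[r hr] _] hb; have rb : b = r by apply/eqP; rewrite -hr hb.
rewrite /wbar hr -rb (negbTE hab); case: (p a) => [w|] //=.
by rewrite hr -rb.
Qed.

Lemma sigmaA_step a b p e : a != b -> is_tree p ->
  sigmaA a b (p, e) = (sigmaT a b p, e + weight_inc a b p (sizes p))%R.
Proof.
move=> hab tp; rewrite /sigmaA /weight_inc /=; case: eqP => [hb|_]; last by rewrite addr0.
by rewrite (wbar_root hab tp hb) /=; case: ifP.
Qed.

Lemma sigmaA3 a b c d p e : a != b -> c != d -> is_tree p ->
  sigmaA a b (sigmaA c d (sigmaA a b (p, e))) =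
  (sigmaT a b (sigmaT c d (sigmaT a b p)), e + weight_inc3 a b c d p (sizes p))%R.
Proof.
move=> hab hcd tp; have t1 := sigmaT_tree hab tp; have t2 := sigmaT_tree hcd t1.
rewrite (sigmaA_step _ hab tp) (sigmaA_step _ hcd t1) (sigmaA_step _ hab t2).
congr pair; rewrite /weight_inc3 -!addrA; congr (_ + (_ + (_ + _)))%R.
  by apply: eq_weight_inc; [apply: sigmaT_fun | apply: sizes_sigmaT (tree_acyclic tp)].
apply: eq_weight_inc => v; first by rewrite sigmaT_fun; apply: eq_sigma_fun; apply: sigmaT_fun.
rewrite (sizes_sigmaT hcd (tree_acyclic t1)).
exact: eq_size_fun (sigmaT_fun _ _ _) (sizes_sigmaT hab (tree_acyclic tp)) v.
Qed.

Lemma braid_sigmaA a b c (x : aug n) : a != b -> b != c -> a != c -> is_aug x ->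
  sigmaA a b (sigmaA b c (sigmaA a b x)) = sigmaA b c (sigmaA a b (sigmaA b c x)).
Proof.
case: x => p e hab hbc hac tp; have hacyc := tree_acyclic tp.
by rewrite !sigmaA3 // braid_sigmaT // weight_braid.
Qed.

End AugmentedBraid.

(** * Far commutation *)

Section Renaming.
Variables (n : nat) (g : 'I_n -> 'I_n).
Hypothesis g_inj : injective g.
Implicit Types (a b v : 'I_n) (x : option 'I_n).

Let g_inj_in : {in predT &, injective g}. Proof. exact: in2W. Qed.
Let opt_inT x : opt_in predT x. Proof. by case: x. Qed.

Lemma eq_omap_fix x a : g a = a -> (omap g x == Some a) = (x == Some a).
Proof. by move=> ga; rewrite -{1}ga (eq_omap_Some_in g_inj_in). Qed.

Lemma sigma_ren_fix a b xb : g a = a -> sigma_ren a b (omap g xb) = sigma_ren a b xb.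
Proof. by move=> ga; rewrite /sigma_ren eq_omap_fix. Qed.

Lemma sigma_par_fix a b xa xb v xv : g a = a -> g b = b -> g v = v ->
  sigma_par a b (omap g xa) (omap g xb) v (omap g xv) = omap g (sigma_par a b xa xb v xv).
Proof.
move=> ga gb gv.
have := sigma_par_map g_inj_in (a := a) (b := b) isT isT (opt_inT xa) (opt_inT xb)
  (v := v) isT (opt_inT xv).
by rewrite ga gb gv.
Qed.

End Renaming.

Lemma swapv_comm n (a b c d : 'I_n) : a != c -> a != d -> b != c -> b != d ->
  swapv a b \o swapv c d =1 swapv c d \o swapv a b.
Proof.
move=> ac ad bc bd w /=.
have [ca da cb db] : [/\ c != a, d != a, c != b & d != b] by rewrite !(eq_sym _ a) !(eq_sym _ b).
have fix_ab := @swapv_id _ a b; have fix_cd := @swapv_id _ c d.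
have [->|wa] := eqVneq w a; first by rewrite swapv_l !fix_cd // swapv_l.
have [->|wb] := eqVneq w b; first by rewrite swapv_r !fix_cd // swapv_r.
have [->|wc] := eqVneq w c; first by rewrite swapv_l !fix_ab // swapv_l.
have [->|wd] := eqVneq w d; first by rewrite swapv_r !fix_ab // swapv_r.
by rewrite fix_ab // !fix_cd // fix_ab.
Qed.

Lemma sigma_ren_comm n (a b c d : 'I_n) xb xd : a != c -> a != d -> b != c -> b != d ->
  sigma_ren a b xb \o sigma_ren c d xd =1 sigma_ren c d xd \o sigma_ren a b xb.
Proof. by move=> ac ad bc bd w; rewrite /sigma_ren; do 2 case: ifP => _ //; apply: swapv_comm. Qed.

Section Far.
Variables (n : nat) (a b c d : 'I_n).
Hypotheses (hab : a != b) (hcd : c != d).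
Hypotheses (hac : a != c) (had : a != d) (hbc : b != c) (hbd : b != d).

Let hca : c != a. Proof. by rewrite eq_sym. Qed.
Let hda : d != a. Proof. by rewrite eq_sym. Qed.
Let hcb : c != b. Proof. by rewrite eq_sym. Qed.
Let hdb : d != b. Proof. by rewrite eq_sym. Qed.

Lemma far_sigmaT_near (p : ptree n) v : (v == a) || (v == b) ->
  sigmaT a b (sigmaT c d p) v = sigmaT c d (sigmaT a b p) v.
Proof.
move=> vab; have [vc vd] : v != c /\ v != d by case/orP: vab => /eqP ->.
have r_inj := @sigma_ren_inj _ c d (p d).
rewrite [LHS]sigmaT_par (sigmaT_out p hac had) (sigmaT_out p hbc hbd) (sigmaT_out p vc vd).
rewrite (sigma_par_fix r_inj) ?sigma_ren_id // (sigmaT_out (sigmaT a b p) vc vd).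
rewrite (sigmaT_out p hda hdb) (sigma_ren_fix (@sigma_ren_inj _ a b _)) ?sigma_ren_id //.
by rewrite sigmaT_par.
Qed.

Lemma far_sigmaT_out (p : ptree n) v : v != a -> v != b -> v != c -> v != d ->
  sigmaT a b (sigmaT c d p) v = sigmaT c d (sigmaT a b p) v.
Proof.
move=> va vb vc vd.
rewrite !sigmaT_out // !(sigma_ren_fix (@sigma_ren_inj _ _ _ _)) ?sigma_ren_id //.
by case: (p v) => //= w; congr Some; apply: sigma_ren_comm.
Qed.

Lemma weight_inc_sigmaT_far (p : ptree n) : acyclic p ->
  weight_inc a b (sigmaT c d p) (sizes (sigmaT c d p)) = weight_inc a b p (sizes p).
Proof.
move=> hacyc; rewrite /weight_inc (sizes_sigmaT hcd hacyc) /size_fun /size_par.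
rewrite (negbTE hac) (negbTE had) (sigmaT_out p hac had) (sigmaT_out p hbc hbd) omap_eqNone.
by rewrite (eq_omap_fix (@sigma_ren_inj _ _ _ _)) ?sigma_ren_id.
Qed.

End Far.

Section FarCommutation.
Variables (n : nat) (a b c d : 'I_n).
Hypotheses (hab : a != b) (hcd : c != d).
Hypotheses (hac : a != c) (had : a != d) (hbc : b != c) (hbd : b != d).

Let hca : c != a. Proof. by rewrite eq_sym. Qed.
Let hda : d != a. Proof. by rewrite eq_sym. Qed.
Let hcb : c != b. Proof. by rewrite eq_sym. Qed.
Let hdb : d != b. Proof. by rewrite eq_sym. Qed.

Lemma far_sigmaT (p : ptree n) : sigmaT a b (sigmaT c d p) = sigmaT c d (sigmaT a b p).
Proof.
apply/ffunP => v; have [vab|] := boolP ((v == a) || (v == b)); first exact: far_sigmaT_near.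
have [vcd _|] := boolP ((v == c) || (v == d)); first by symmetry; apply: far_sigmaT_near.
by rewrite !negb_or => /andP [vc vd] /andP [va vb]; apply: far_sigmaT_out.
Qed.

Lemma far_sigmaA (x : aug n) : is_aug x -> sigmaA a b (sigmaA c d x) = sigmaA c d (sigmaA a b x).
Proof.
case: x => p e tp; have hacyc := tree_acyclic tp.
rewrite (sigmaA_step _ hcd tp) (sigmaA_step _ hab tp) (sigmaA_step _ hab (sigmaT_tree hcd tp)).
by rewrite (sigmaA_step _ hcd (sigmaT_tree hab tp)) far_sigmaT !weight_inc_sigmaT_far // addrAC.
Qed.

End FarCommutation.

(** * Bijectivity *)

Lemma inj_model_check : all (fun x0 => all (fun x1 => all (fun y0 => all (fun y1 =>
    let h := nth None [:: x0; x1] in let h' := nth None [:: y0; y1] in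
    [&& acyclic2 h o0 o1, acyclic2 h' o0 o1, sigma_fun o0 o1 h o0 == sigma_fun o0 o1 h' o0
      & sigma_fun o0 o1 h o1 == sigma_fun o0 o1 h' o1] ==> (x0 == y0) && (x1 == y1))
  (opts 6)) (opts 6)) (opts 6)) (opts 6).
Proof. by vm_compute. Qed.

Lemma inj_model (x0 x1 y0 y1 : option 'I_6)
    (h := nth None [:: x0; x1]) (h' := nth None [:: y0; y1]) :
  acyclic2 h o0 o1 -> acyclic2 h' o0 o1 ->
  sigma_fun o0 o1 h o0 = sigma_fun o0 o1 h' o0 -> sigma_fun o0 o1 h o1 = sigma_fun o0 o1 h' o1 ->
  x0 = y0 /\ x1 = y1.
Proof.
move=> hacyc hacyc' /eqP e0 /eqP e1; move: inj_model_check.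
move=> /allP /(_ x0 (mem_opts x0)) /allP /(_ x1 (mem_opts x1)).
move=> /allP /(_ y0 (mem_opts y0)) /allP /(_ y1 (mem_opts y1)).
by move=> /implyP /(_ (introT and4P (And4 hacyc hacyc' e0 e1))) /andP [/eqP -> /eqP ->].
Qed.

Lemma sigmaT_inj n (a b : 'I_n) (p p' : ptree n) : a != b -> acyclic p -> acyclic p' ->
  sigmaT a b p = sigmaT a b p' -> p = p'.
Proof.
move=> hab hacyc hacyc' e.
pose U := [:: a; b]; pose W := [seq odflt u (p u) | u <- U] ++ [seq odflt u (p' u) | u <- U].
pose g := enc 5 (U ++ W); have g_inj : {in U ++ W &, injective g} by apply: enc_inj.
have UV : {subset U <= mem (U ++ W)} by move=> u hu; rewrite mem_cat hu.
have pic : agree g (mem (U ++ W)) U p (picture g U p).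
  by apply: agree_tree_picture => // w hw; rewrite mem_cat hw.
have pic' : agree g (mem (U ++ W)) U p' (picture g U p').
  by apply: agree_tree_picture => // w hw; rewrite mem_cat hw orbT.
have [ga gb] : g a = o0 /\ g b = o1 by split; apply: enc_index; rewrite /= ?eqxx ?(negbTE hab).
have [ha hb] : a \in U /\ b \in U by rewrite !inE !eqxx orbT.
have step u : u \in U -> sigma_fun (g a) (g b) (picture g U p) (g u) =
                         sigma_fun (g a) (g b) (picture g U p') (g u).
  move=> hu; have [_ ->] := agree_sigma_fun g_inj UV ha hb pic hu.
  by have [_ ->] := agree_sigma_fun g_inj UV ha hb pic' hu; rewrite -!sigmaT_fun e.
have [eqa eqb] : p a = p' a /\ p b = p' b.
  have [] := @inj_model (omap g (p a)) (omap g (p b)) (omap g (p' a)) (omap g (p' b)).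
  - by rewrite -ga -gb (acyclic2_agree g_inj UV ha hb pic) acyclic2_tree.
  - by rewrite -ga -gb (acyclic2_agree g_inj UV ha hb pic') acyclic2_tree.
  - by have := step a ha; rewrite ga gb.
  - by have := step b hb; rewrite ga gb.
  move=> ea eb; split.
    by apply: (agree_inj g_inj ha pic pic'); rewrite ga.
  by apply: (agree_inj g_inj hb pic pic'); rewrite gb.
apply/ffunP => v; have [->|va] := eqVneq v a => //; have [->|vb] := eqVneq v b => //.
have := congr1 (fun q : ptree n => q v) e; rewrite /= !sigmaT_out // eqb.
exact/inj_omap/sigma_ren_inj.
Qed.

Lemma sigmaA_inj n (a b : 'I_n) (x y : aug n) : a != b -> is_aug x -> is_aug y ->
  sigmaA a b x = sigmaA a b y -> x = y.
Proof.
case: x y => [p e] [p' e'] hab tp tp'; rewrite !sigmaA_step // => /pair_equal_spec [ep ew].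
have {}ep : p = p' := sigmaT_inj hab (tree_acyclic tp) (tree_acyclic tp') ep.
by subst p'; congr pair; apply: (addIr _ ew).
Qed.

Lemma sigmaA_aug n (a b : 'I_n) (x : aug n) : a != b -> is_aug x -> is_aug (sigmaA a b x).
Proof. exact: sigmaT_tree. Qed.

Lemma in_inj_bij (T : finType) (P : pred T) (f : T -> T) :
  {in P, forall x, P (f x)} -> {in P &, injective f} ->
  exists g : T -> T, forall x, P x -> [/\ P (g x), g (f x) = x & f (g x) = x].
Proof.
move=> fP f_inj; pose A := [set x | P x].
have fA : f @: A = A.
  apply/eqP; rewrite eqEcard card_in_imset ?leqnn ?andbT; last first.
    by move=> x y; rewrite !inE; apply: f_inj.
  by apply/subsetP => y /imsetP [x]; rewrite inE => hx ->; rewrite inE fP.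
exists (fun y => if [pick x | P x && (f x == y)] is Some x then x else y) => x hx.
split; first by case: pickP => [z /andP [] //|_].
  case: pickP => [z /andP [hz /eqP efz]|none]; first exact: f_inj hz hx efz.
  by move: (none x); rewrite hx eqxx.
case: pickP => [z /andP [_ /eqP] //|none].
have : x \in f @: A by rewrite fA inE.
by case/imsetP => z; rewrite inE => hz ex; move: (none z); rewrite hz ex eqxx.
Qed.

Lemma sigma_ordinals n i : 0 < i < n ->
  exists a b : 'I_n, [/\ val a = i.-1, val b = i & sigma i =1 sigmaA a b].
Proof.
case/andP => i_gt0 lt_in; have lt_i1n : i.-1 < n by rewrite (leq_ltn_trans (leq_pred i)).
exists (Ordinal lt_i1n), (Ordinal lt_in); split=> // x.
by rewrite /sigma (insubT (fun k => k < n) lt_i1n) (insubT (fun k => k < n) lt_in).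
Qed.

Lemma ord_neq n (u w : 'I_n) : val u != val w -> u != w.
Proof. by rewrite val_eqE. Qed.

Theorem theorem1p12 (n : nat) (hn : 2 <= n) :
  (* each sigma_i maps augmented trees to augmented trees *)
  (forall i, 1 <= i <= n - 1 -> forall x : aug n, is_aug x -> is_aug (sigma i x)) /\
  (* each sigma_i is a bijection of the set of augmented trees *)
  (forall i, 1 <= i <= n - 1 -> exists g : aug n -> aug n,
     forall x : aug n, is_aug x ->
       [/\ is_aug (g x), g (sigma i x) = x & sigma i (g x) = x]) /\
  (* far commutation *)
  (forall i j, 1 <= i <= n - 1 -> 1 <= j <= n - 1 -> 2 <= `|(i:int) - (j:int)|%N ->
     forall x : aug n, is_aug x -> sigma i (sigma j x) = sigma j (sigma i x)) /\
  (* braid relation *)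
  (forall i, 1 <= i <= n - 2 -> forall x : aug n, is_aug x ->
     sigma i (sigma i.+1 (sigma i x)) = sigma i.+1 (sigma i (sigma i.+1 x))).
Proof.
have gen i : 1 <= i <= n - 1 ->
    exists a b : 'I_n, [/\ val a = i.-1, val b = i, a != b & sigma i =1 sigmaA a b].
  move=> hi; have [|a [b [va vb eab]]] := @sigma_ordinals n i; first lia.
  by exists a, b; split=> //; apply: ord_neq; rewrite va vb; lia.
split; [|split; [|split]].
- by move=> i /gen [a [b [_ _ hab ea]]] x hx; rewrite ea; apply: sigmaA_aug.
- move=> i /gen [a [b [_ _ hab eab]]].
  have [g hg] := in_inj_bij (P := @is_aug n) (f := sigmaA a b)
    (fun x => sigmaA_aug hab) (fun x y => sigmaA_inj hab).
  by exists g => x hx; rewrite !eab; apply: hg.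
- move=> i j /gen [a [b [va vb hab eab]]] /gen [c [d [vc vd hcd ecd]]] hij x hx.
  by rewrite !eab !ecd; apply: far_sigmaA => //; apply: ord_neq; rewrite ?va ?vb ?vc ?vd; lia.
- move=> i hi x hx; have [|a [b [va vb hab eab]]] := gen i; first lia.
  have [|b' [c [vb' vc hbc ebc]]] := gen i.+1; first lia.
  have eb : b' = b by apply: val_inj; rewrite vb vb'.
  have hac : a != c by apply: ord_neq; rewrite va vc; lia.
  by rewrite !eab !ebc eb; apply: braid_sigmaA; rewrite // -eb.
Qed.
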